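(* Let $\mathcal T=(T,\lambda)$ be a temporal oriented tree with connectivity graph $G$, and let $H$ be an induced cycle of $G$ of even length $k\ge 6$, with vertices cyclically ordered $u_1,\dots,u_k$ (indices taken modulo $k$). For each edge $e=uv$ of $G$, let $Q_e$ be any temporal path of $\mathcal T$ from $u$ to $v$ or from $v$ to $u$. Then for every $i$, the paths $Q_{u_iu_{i+1}}$ and $Q_{u_{i+2}u_{i+3}}$ have a common vertex.
   Context: A temporal digraph is a pair $(D,\lambda)$ with $D=(V,A)$ a finite digraph and $\lambda:A\to 2^{\{1,\dots,t_{\max}\}}$ giving the time-steps at which each arc is active. A temporal oriented tree $\mathcal T=(T,\lambda)$ is one whose underlying digraph $T$ is an orientation of a tree. A temporal path is a sequence $(v_1,v_2,t_1),\dots,(v_{k-1},v_k,t_{k-1})$ with pairwise distinct $v_i$, $\overrightarrow{v_iv_{i+1}}\in A$, $t_i\in\lambda(\overrightarrow{v_iv_{i+1}})$ and $t_1<\dots<t_{k-1}$. Two vertices $u\ne v$ are temporally connected if there is a temporal path from $u$ to $v$ or from $v$ to $u$. The connectivity graph of $\mathcal T$ is the undirected graph $G$ with $V(G)=V(T)$ and $uv\in E(G)$ iff $u\neq v$ and $u,v$ are temporally connected. *)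

From mathcomp Require Import all_boot.
Set Implicit Arguments. Unset Strict Implicit. Unset Printing Implicit Defensive.

Definition undir (T : finType) (A : rel T) : rel T := fun x y => A x y || A y x.

Definition is_cycle (T : finType) (U : rel T) (x : T) (p : seq T) : bool :=
  [&& uniq (x :: p), 2 <= size p, path U x p & U (last x p) x].

Definition oriented_tree (T : finType) (A : rel T) : Prop :=
  [/\ 0 < #|T|,
      forall x, ~~ A x x,
      forall x y, A x y -> ~~ A y x,
      forall x y, connect (undir A) x y &
      forall x p, ~~ is_cycle (undir A) x p].

(* Temporal labelling: lam u v t means arc uv is active at time t. *)
Definition labelling_ok (T : finType) (tmax : nat) (lam : T -> T -> pred nat) :=
  forall u v t, lam u v t -> 1 <= t <= tmax.

(* A temporal path is encoded as a start vertex x and the list s of pairs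
   (v_{i+1}, t_i); i.e. x = v_1 and the triples are (v_i, v_{i+1}, t_i). *)
Definition tpath (T : finType) (A : rel T) (lam : T -> T -> pred nat)
    (x : T) (s : seq (T * nat)) : bool :=
  [&& 0 < size s,
      uniq (x :: map fst s),
      path (fun a b : T * nat => A a.1 b.1 && lam a.1 b.1 b.2) (x, 0) s &
      sorted ltn (map snd s)].

Definition tpath_from_to (T : finType) (A : rel T) (lam : T -> T -> pred nat)
    (P : T * seq (T * nat)) (u v : T) : bool :=
  [&& tpath A lam P.1 P.2, P.1 == u & last P.1 (map fst P.2) == v].

Definition tverts (T : finType) (P : T * seq (T * nat)) : seq T :=
  P.1 :: map fst P.2.

Definition tconnected (T : finType) (A : rel T) (lam : T -> T -> pred nat)
    (u v : T) : Prop :=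
  u <> v /\
  ((exists s, tpath_from_to A lam (u, s) u v) \/
   (exists s, tpath_from_to A lam (v, s) v u)).

Definition connG (T : finType) (A : rel T) (lam : T -> T -> pred nat) : T -> T -> Prop :=
  fun u v => tconnected A lam u v.

(* u : nat -> T (indices mod k) lists the vertices u_0,...,u_{k-1} of an
   induced cycle of length k in the graph with edge relation G. *)
Definition induced_cycle (T : finType) (G : T -> T -> Prop) (k : nat) (u : nat -> T) : Prop :=
  [/\ forall i, u (i + k) = u i,
      forall i j, i < k -> j < k -> u i = u j -> i = j,
      forall i, G (u i) (u i.+1) &
      forall i j, i < k -> j < k -> G (u i) (u j) ->
        j = i.+1 %% k \/ i = j.+1 %% k].

From mathcomp Require Import all_boot zify.
Set Implicit Arguments. Unset Strict Implicit. Unset Printing Implicit Defensive.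

(* Suppose the two paths were vertex-disjoint.  The temporal path realising the
   edge u_{i+1}u_{i+2} is a directed path from one of them to the other, so it
   leaves the one it starts from through some arc pq; deleting pq splits the
   tree into p's side, containing that path, and q's side, containing the other.
   A directed path can only pass from p's side to q's side through pq, so any
   two edges of G crossing this cut are realised by temporal paths through pq,
   and splicing the earlier prefix with the later suffix shows that one of the
   two cross pairs is an edge of G.  The induced cycle crosses the cut at
   u_{i+1}u_{i+2} and again somewhere on its way back from u_{i+3} to u_i, and
   the resulting chord is impossible. *)

Lemma split_at_entry (S : Type) (P : pred S) x s : ~~ P x -> P (last x s) ->
  exists s1 y s2, [/\ s = s1 ++ y :: s2, all (predC P) s1, ~~ P (last x s1) & P y].
Proof.
elim: s x => [|y s IH] x /=; first by move/negbTE->.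
move=> nPx Plast; have [Py|nPy] := boolP (P y); first by exists [::], y, s.
have [s1 [z [s2 [-> h1 h2 Pz]]]] := IH y nPy Plast.
by exists (y :: s1), z, s2; rewrite /= nPy h1.
Qed.

Lemma path_closed_all (S : Type) (e : rel S) (P : pred S) x s :
  (forall a b, e a b -> P a -> P b) -> path e x s -> P x -> all P (x :: s).
Proof.
move=> closedP; elim: s x => [|y s IH] x /=; first by rewrite andbT.
by move=> /andP[exy hys] Px; rewrite Px; exact: IH hys (closedP _ _ exy Px).
Qed.

Lemma sorted_rcons_ltn_le s t1 t2 :
  sorted ltn (rcons s t1) -> t1 <= t2 -> sorted ltn (rcons s t2).
Proof.
case: s => [|h s] //=; rewrite !rcons_path => /andP[-> lt1] le12.
exact: leq_trans lt1 le12.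
Qed.

Definition tstep (T : finType) (A : rel T) (lam : T -> T -> pred nat) : rel (T * nat) :=
  fun a b => A a.1 b.1 && lam a.1 b.1 b.2.

Section TemporalPaths.
Variables (T : finType) (A : rel T) (lam : T -> T -> pred nat).

Lemma tstep_path z s : path (tstep A lam) z s -> path A z.1 (map fst s).
Proof. by rewrite path_map; apply: sub_path => a b /andP[]. Qed.

Lemma tconnected_sym x y : tconnected A lam x y -> tconnected A lam y x.
Proof. by case=> ne [h|h]; split; [by move/esym | right | by move/esym | left]. Qed.

Lemma tconnected_connect x y :
  tconnected A lam x y -> connect A x y || connect A y x.
Proof.
case=> _ [] [s /and3P[/and4P[_ _ hs _] _ /eqP hlast]];
  apply/orP; [left | right]; apply/connectP; exists (map fst s) => //;
  exact: tstep_path hs.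
Qed.

Lemma tverts_of_tpath P a b :
  tpath_from_to A lam P a b || tpath_from_to A lam P b a ->
  [/\ path A P.1 (map fst P.2), a \in tverts P & b \in tverts P].
Proof.
case: P => x s; rewrite /tverts /=.
by case/orP=> /and3P[/and4P[_ _ /tstep_path hs _] /eqP<- /eqP<-];
  rewrite hs mem_head mem_last.
Qed.

Lemma tpath_splice a y s1 c t1 s1' b z s2 t2 s2' :
  tpath_from_to A lam (a, s1 ++ (c, t1) :: s1') a y ->
  tpath_from_to A lam (b, s2 ++ (c, t2) :: s2') b z ->
  last a (map fst s1) = last b (map fst s2) -> t1 <= t2 ->
  {in c :: map fst s2', forall w, w \notin a :: map fst s1} ->
  tpath_from_to A lam (a, s1 ++ (c, t2) :: s2') a z.
Proof.
rewrite /tpath_from_to /tpath; cbn [fst snd]; rewrite !map_cat !last_cat eqxx.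
move=> /and3P[/and4P[_ uniq1 path1 sorted1] _ _].
move=> /and3P[/and4P[_ uniq2 path2 sorted2] _ ->] elast le12 disj.
rewrite !andbT; apply/and4P; split; first by rewrite size_cat addnS.
- move: uniq1 uniq2; rewrite -!cat_cons !cat_uniq.
  by move=> /and3P[-> _ _] /and3P[_ _ ->]; rewrite andbT andTb; apply/hasPn.
- move: path1 path2; rewrite !cat_path /= => /and3P[-> _ _] /and3P[_ step ->].
  have -> : (last (a, 0) s1).1 = (last (b, 0) s2).1 by rewrite -!(last_map fst).
  by rewrite step.
- move: sorted1 sorted2; rewrite !sorted_cat_cons.
  by move=> /andP[sorted1 _] /andP[_ ->]; rewrite (sorted_rcons_ltn_le sorted1 le12).
Qed.

End TemporalPaths.

Section ForestCut.
Variables (T : finType) (A : rel T) (lam : T -> T -> pred nat).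
Hypothesis Aanti : forall x y, A x y -> ~~ A y x.
Hypothesis Aacyclic : forall x p, ~~ is_cycle (undir A) x p.

Section Cut.
Variables p q : T.
Hypothesis Apq : A p q.

Definition cut_arc : rel T := fun x y => A x y && ((x, y) != (p, q)).

Definition side : pred T := connect (undir cut_arc) q.

Lemma side_q : side q.
Proof. exact: connect0. Qed.

Lemma side_p : ~~ side p.
Proof.
apply/negP => /connectP[l hl ep]; case/shortenP: hl ep => l' hl' uniql' _ ep.
have sub_undir : subrel (undir cut_arc) (undir A).
  by move=> x y; rewrite /undir => /orP[/andP[-> _] | /andP[-> _]]; rewrite ?orbT.
have size_l' : 1 < size l'.
  case: l' hl' ep {uniql'} => [|y [|z l'']] //= => [_ epq | /andP[Uqy _] epy].
    by move: Apq (Aanti Apq); rewrite epq => ->.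
  by move: Uqy; rewrite -epy /undir /cut_arc eqxx andbF orbF (negbTE (Aanti Apq)).
have : is_cycle (undir A) q l'.
  by rewrite /is_cycle uniql' size_l' (sub_path sub_undir hl') -ep /undir Apq.
by rewrite (negbTE (Aacyclic _ _)).
Qed.

Lemma side_arc c e : A c e -> (c, e) != (p, q) -> side c = side e.
Proof.
move=> Ace ne; apply/idP/idP => hs; apply: connect_trans hs (connect1 _);
  by rewrite /undir /cut_arc Ace ne ?orbT.
Qed.

Lemma side_fwd c e : A c e -> side c -> side e.
Proof.
move=> Ace; have [[_ ->] _|ne] := eqVneq (c, e) (p, q); first exact: side_q.
by rewrite (side_arc Ace ne).
Qed.

Lemma side_entry c e : A c e -> ~~ side c -> side e -> (c, e) = (p, q).
Proof.
move=> Ace nc se; apply/eqP; apply: contraNT nc => ne.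
by rewrite (side_arc Ace ne).
Qed.

Lemma side_path_const x l : path A x l -> ~~ ((p \in x :: l) && (q \in x :: l)) ->
  {in x :: l, forall w, side w = side x}.
Proof.
elim: l x => [|y l IH] x; first by move=> _ _ w; rewrite inE => /eqP->.
move=> /= /andP[Axy hyl] npq.
have sub : {subset y :: l <= x :: y :: l} by move=> v hv; rewrite in_cons hv orbT.
have exy : side x = side y.
  apply: (side_arc Axy); apply: contraNneq npq => -[<- <-].
  by rewrite !inE !eqxx orbT.
have npq' : ~~ ((p \in y :: l) && (q \in y :: l)).
  by apply: contraNN npq => /andP[/sub -> /sub ->].
move=> w; rewrite in_cons => /orP[/eqP -> // | hw].
by rewrite exy (IH y hyl npq' w hw).
Qed.

Lemma tpath_cut a s b : tpath_from_to A lam (a, s) a b -> ~~ side a -> side b ->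
  exists s1 t s2, [/\ s = s1 ++ (q, t) :: s2, last a (map fst s1) = p,
    {in a :: map fst s1, forall w, ~~ side w} & {in q :: map fst s2, forall w, side w}].
Proof.
move=> /and3P[/and4P[_ _ hs _] _ /eqP hlast] na sb.
have [|s1 [[c t] [s2 [es all1 nlast1 /= sc]]]] :=
  split_at_entry (P := fun z : T * nat => side z.1) (x := (a, 0)) (s := s) na.
  by rewrite /= -(last_map fst) /= hlast.
move: hs; rewrite es cat_path /= => /and3P[_ /andP[Ac _] hs2].
have [ep eq] := side_entry Ac nlast1 sc; subst c.
exists s1, t, s2; split=> //; first by rewrite -ep -(last_map fst).
- move=> w; rewrite in_cons => /orP[/eqP -> // | ]; move: w; apply/allP.
  by rewrite all_map.
- by apply/allP; exact: path_closed_all side_fwd (tstep_path hs2) side_q.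
Qed.

Lemma tconnected_oriented x y : tconnected A lam x y -> ~~ side x -> side y ->
  exists s, tpath_from_to A lam (x, s) x y.
Proof.
case=> _ [[s hs] | [s /and3P[/and4P[_ _ /tstep_path hs _] _ /eqP hlast]]] nx sy.
  by exists s.
have /allP/(_ _ (mem_last y (map fst s))) := path_closed_all side_fwd hs sy.
by rewrite hlast (negbTE nx).
Qed.

Lemma side_cross x1 y1 x2 y2 :
  tconnected A lam x1 y1 -> tconnected A lam x2 y2 -> side x1 != side y1 ->
  side x2 = side x1 -> side y2 = side y1 ->
  tconnected A lam x1 y2 \/ tconnected A lam x2 y1.
Proof.
move=> c1 c2 ne ex2 ey2.
wlog nx1 : x1 y1 x2 y2 c1 c2 ne ex2 ey2 / ~~ side x1.
  move=> wlog; have [sx1|] := boolP (side x1); last exact: wlog.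
  have [||||c|c] := wlog y1 x1 y2 x2 (tconnected_sym c1) (tconnected_sym c2).
  - by rewrite eq_sym.
  - exact: ey2.
  - exact: ex2.
  - by move: ne; rewrite sx1; case: (side y1).
  - by right; apply: tconnected_sym.
  - by left; apply: tconnected_sym.
have sy1 : side y1 by move: ne; rewrite (negbTE nx1); case: (side y1).
have nx2 : ~~ side x2 by rewrite ex2.
have sy2 : side y2 by rewrite ey2.
have [s1 h1] := tconnected_oriented c1 nx1 sy1.
have [s2 h2] := tconnected_oriented c2 nx2 sy2.
have [s1a [t1 [s1b [es1 l1 in1 out1]]]] := tpath_cut h1 nx1 sy1.
have [s2a [t2 [s2b [es2 l2 in2 out2]]]] := tpath_cut h2 nx2 sy2.
subst s1 s2; case: (leqP t1 t2) => ht; [left | right].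
- split; first by move=> e; move: sy2; rewrite -e (negbTE nx1).
  left; exists (s1a ++ (q, t2) :: s2b).
  apply: tpath_splice h1 h2 _ ht _; first by rewrite l1 l2.
  by move=> w /out2 sw; apply/negP => /in1; rewrite sw.
- split; first by move=> e; move: sy1; rewrite -e (negbTE nx2).
  left; exists (s2a ++ (q, t1) :: s1b).
  apply: tpath_splice h2 h1 _ (ltnW ht) _; first by rewrite l1 l2.
  by move=> w /out1 sw; apply/negP => /in2; rewrite sw.
Qed.

End Cut.

Lemma separating_arc x1 l1 x2 l2 z w :
  path A x1 l1 -> path A x2 l2 -> {in x1 :: l1, forall v, v \notin x2 :: l2} ->
  z \in x1 :: l1 -> w \in x2 :: l2 -> connect A z w ->
  exists p q, A p q /\
    {in x1 :: l1 & x2 :: l2, forall w1 w2, ~~ side p q w1 && side p q w2}.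
Proof.
move=> path1 path2 disj z1 w2 /connectP[s pzs ew].
have [||s1 [b [s2 [es all1 /negbNE a1 b1]]]] :=
  split_at_entry (P := fun v => v \notin x1 :: l1) (x := z) (s := s).
- by rewrite z1.
- by rewrite -ew; apply: contraTN w2 => /disj.
move: pzs; rewrite es cat_path /= => /and3P[_ Aab pbs2].
set a := last z s1 in a1 Aab.
exists a, b; split=> // w1 w2' hw1 hw2.
have side1 : {in x1 :: l1, forall v, side a b v = side a b x1}.
  by move: (side_path_const (p := a) (q := b) path1); apply; rewrite (negbTE b1) andbF.
have side2 : {in x2 :: l2, forall v, side a b v = side a b x2}.
  by move: (side_path_const (p := a) (q := b) path2); apply; rewrite (negbTE (disj a a1)).
rewrite side1 // -(side1 a a1) (negbTE (side_p Aab)) side2 // -(side2 w w2).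
rewrite ew es last_cat /=.
by have /allP := path_closed_all (@side_fwd a b) pbs2 (side_q a b); apply; exact: mem_last.
Qed.

Lemma separating_arc_sym x1 l1 x2 l2 z w :
  path A x1 l1 -> path A x2 l2 -> {in x1 :: l1, forall v, v \notin x2 :: l2} ->
  z \in x1 :: l1 -> w \in x2 :: l2 -> connect A z w || connect A w z ->
  exists p q, A p q /\
    {in x1 :: l1 & x2 :: l2, forall w1 w2, side p q w1 != side p q w2}.
Proof.
move=> path1 path2 disj z1 w2 /orP[czw | cwz].
  have [p [q [Apq sep]]] := separating_arc path1 path2 disj z1 w2 czw.
  by exists p, q; split=> // v1 v2 h1 h2; case/andP: (sep _ _ h1 h2) => /negbTE-> ->.
have disj' : {in x2 :: l2, forall v, v \notin x1 :: l1}.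
  by move=> v; apply: contraTN => /disj.
have [p [q [Apq sep]]] := separating_arc path2 path1 disj' w2 z1 cwz.
by exists p, q; split=> // v1 v2 h1 h2; case/andP: (sep _ _ h2 h1) => /negbTE-> ->.
Qed.

End ForestCut.

Lemma cycle_window_adj k i a b : 3 < k -> i < a < i.+3 -> i.+2 < b <= i + k ->
  (a.+1 == b %[mod k]) || (b.+1 == a %[mod k]) ->
  (a == i.+2) && (b == i.+3) || (a == i.+1) && (b == i + k).
Proof.
move=> hk /andP[ia ai] /andP[ib bi].
have [{ia ai}a' -> a'bounds] : exists2 a', a = i + a' & 0 < a' < 3 by exists (a - i); lia.
have [{ib bi}b' -> b'bounds] : exists2 b', b = i + b' & 2 < b' <= k by exists (b - i); lia.
rewrite -!addnS !eqn_modDl !(@modn_small a') ?(@modn_small a'.+1); try lia.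
have [b'k | ->] : b' < k \/ b' = k by lia.
  rewrite modn_small //; have [b'1k | ->] : b'.+1 < k \/ b'.+1 = k by lia.
    by rewrite modn_small //; lia.
  by rewrite modnn; lia.
by rewrite modnn -[k.+1]addn1 modnDl modn_small; lia.
Qed.

Lemma exists_flip (f : nat -> bool) m d :
  f m != f (m + d) -> exists2 l, m <= l < m + d & f l != f l.+1.
Proof.
elim: d => [|d IH]; first by rewrite addn0 eqxx.
have [e | ne] := eqVneq (f m) (f (m + d)) => hne.
  by exists (m + d); [lia | rewrite -addnS -e].
by have [l hl fl] := IH ne; exists l => //; lia.
Qed.

Section InducedCycle.
Variables (T : finType) (G : T -> T -> Prop) (k : nat) (u : nat -> T).
Hypothesis Gsym : forall x y, G x y -> G y x.
Hypothesis ucycle : induced_cycle G k u.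
Hypothesis k_gt3 : 3 < k.

Lemma induced_cycle_modn j : u (j %% k) = u j.
Proof.
case: ucycle => per _ _ _; rewrite {2}(divn_eq j k).
elim: (j %/ k) => [|n IH]; first by rewrite mul0n add0n.
by rewrite mulSn -addnA addnC per.
Qed.

Lemma induced_cycle_adj a b :
  G (u a) (u b) -> (a.+1 == b %[mod k]) || (b.+1 == a %[mod k]).
Proof.
case: ucycle => _ _ _ chord; have k_gt0 : 0 < k by lia.
have modS m : (m %% k).+1 %% k = m.+1 %% k by rewrite -addn1 modnDml addn1.
rewrite -(induced_cycle_modn a) -(induced_cycle_modn b).
move=> /(chord _ _ (ltn_pmod a k_gt0) (ltn_pmod b k_gt0)) [-> | ->]; apply/orP;
  [left | right]; by rewrite modS.
Qed.

Lemma induced_cycle_no_cut (f : T -> bool) i :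
  (forall x1 y1 x2 y2, G x1 y1 -> G x2 y2 -> f x1 != f y1 ->
     f x2 = f x1 -> f y2 = f y1 -> G x1 y2 \/ G x2 y1) ->
  ~ {in [:: u i; u i.+1] & [:: u i.+2; u i.+3], forall x y, f x != f y}.
Proof.
move=> cross sep; case: ucycle => per _ edge _.
have f02 : f (u i) != f (u i.+2) by apply: sep; rewrite !inE eqxx ?orbT.
have f12 : f (u i.+1) != f (u i.+2) by apply: sep; rewrite !inE eqxx ?orbT.
have f13 : f (u i.+1) != f (u i.+3) by apply: sep; rewrite !inE eqxx ?orbT.
have f01 : f (u i) = f (u i.+1).
  by move: f02 f12; case: (f (u i)); case: (f (u i.+1)); case: (f (u i.+2)).
have f23 : f (u i.+2) = f (u i.+3).
  by move: f12 f13; case: (f (u i.+1)); case: (f (u i.+2)); case: (f (u i.+3)).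
have fk : f (u (i + k)) = f (u i) by rewrite per.
have chord a b : i < a < i.+3 -> i.+2 < b <= i + k ->
    G (u a) (u b) \/ G (u b) (u a) -> f (u a) = f (u b).
  move=> ha hb hG; have : (a.+1 == b %[mod k]) || (b.+1 == a %[mod k]).
    by case: hG => /induced_cycle_adj //; rewrite orbC.
  by case/(cycle_window_adj k_gt3 ha hb)/orP => /andP[/eqP-> /eqP->]; rewrite ?fk.
have [l /andP[il lk] fl] : exists2 l, i.+3 <= l < i + k & f (u l) != f (u l.+1).
  have e : i + k = i.+3 + (k - 3) by lia.
  rewrite e; apply: (@exists_flip (fun j => f (u j)) i.+3 (k - 3)).
  by rewrite -e fk f01 -f23 eq_sym.
have [x [y [Gxy hx hy fx fy]]] : exists x y, [/\ G (u x) (u y),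
    i.+2 < x <= i + k, i.+2 < y <= i + k, f (u x) = f (u i.+1) & f (u y) = f (u i.+2)].
  have bl : i.+2 < l <= i + k by lia.
  have bl1 : i.+2 < l.+1 <= i + k by lia.
  have [e | ne] := eqVneq (f (u l)) (f (u i.+1)).
    exists l, l.+1; split=> //.
    by move: fl f12; rewrite e; case: (f (u i.+1)); case: (f (u l.+1)); case: (f (u i.+2)).
  exists l.+1, l; split=> //; first exact: Gsym (edge l).
    by move: fl f12 ne; case: (f (u l)); case: (f (u i.+1)); case: (f (u l.+1)).
  by move: f12 ne; case: (f (u l)); case: (f (u i.+1)); case: (f (u i.+2)).
have i1 : i < i.+1 < i.+3 by lia.
have i2 : i < i.+2 < i.+3 by lia.
case: (cross _ _ _ _ (edge i.+1) Gxy f12 fx fy) => [G1 | G2].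
  by move: f12; rewrite (chord _ _ i1 hy (or_introl G1)) fy eqxx.
by move: f12; rewrite (chord _ _ i2 hx (or_intror G2)) fx eqxx.
Qed.

End InducedCycle.

Theorem mainTheorem9 (T : finType) (A : rel T) (tmax : nat)
    (lam : T -> T -> pred nat)
    (hT : oriented_tree A) (hlam : labelling_ok tmax lam)
    (k : nat) (u : nat -> T)
    (hk6 : 6 <= k) (hkeven : ~~ odd k)
    (hH : induced_cycle (connG A lam) k u)
    (Q : T -> T -> T * seq (T * nat))
    (hQsym : forall x y, connG A lam x y -> Q x y = Q y x)
    (hQ : forall x y, connG A lam x y ->
            tpath_from_to A lam (Q x y) x y || tpath_from_to A lam (Q x y) y x) :
  forall i, exists w,
    w \in tverts (Q (u i) (u i.+1)) /\ w \in tverts (Q (u i.+2) (u i.+3)).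
Proof.
case: hT => _ _ Aanti _ Aacyclic i; have [_ _ edge _] := hH.
have [/hasP[w w1 w2] | /hasPn disj] := boolP (has [in tverts (Q (u i.+2) (u i.+3))]
                                               (tverts (Q (u i) (u i.+1)))).
  by exists w.
exfalso.
have [path1 in0 in1] := tverts_of_tpath (hQ _ _ (edge i)).
have [path2 in2 in3] := tverts_of_tpath (hQ _ _ (edge i.+2)).
have [p [q [_ sep]]] := separating_arc_sym Aanti Aacyclic path1 path2 disj in1 in2
  (tconnected_connect (edge i.+1)).
apply: (induced_cycle_no_cut (i := i) (@tconnected_sym T A lam) hH _ (@side_cross T A lam p q))
  => [|x y]; first exact: leq_trans hk6.
by rewrite !inE => /orP[]/eqP-> /orP[]/eqP->; apply: sep.
Qed.
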